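(* For every positive integer $k$ there exists a finite-dimensional real $k$-step nilpotent Lie algebra carrying an abelian hypercomplex structure. Concretely, if $A$ is the complex commutative algebra of $(k+1)\times(k+1)$ complex upper triangular Toeplitz matrices with zero diagonal (matrices whose $(p,q)$ entry is $a_{q-p}$ for $q>p$ and $0$ otherwise, with $a_1,\dots,a_k\in\mathbb C$), then $\mathfrak{aff}(A)$ is $k$-step nilpotent and the structures $J(a,b)=(b,-a)$, $K(a,b)=(ia,-ib)$ form an abelian hypercomplex structure on it.
   Context: For a commutative associative algebra $A$ (viewed as a real algebra), $\mathfrak{aff}(A)$ is the real Lie algebra $A\oplus A$ with bracket $[(a,b),(a',b')]=(0,ab'-a'b)$. An abelian complex structure on a real Lie algebra is a linear map $J$ with $J^2=-\mathrm{Id}$ and $[Jx,Jy]=[x,y]$ for all $x,y$; an abelian hypercomplex structure is a pair of anticommuting abelian complex structures. A Lie algebra is $k$-step nilpotent if its lower central series $\mathfrak g^{1}=\mathfrak g$, $\mathfrak g^{j+1}=[\mathfrak g,\mathfrak g^j]$ satisfies $\mathfrak g^{k+1}=0\ne\mathfrak g^{k}$. *)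

From HB Require Import structures.
From mathcomp Require Import all_boot all_order all_algebra.
From mathcomp Require Import complex.
From mathcomp Require Import reals.
Set Implicit Arguments. Unset Strict Implicit. Unset Printing Implicit Defensive.
Import Order.TTheory GRing.Theory Num.Theory.
Local Open Scope ring_scope.
Local Open Scope complex_scope.

Section Aff.
Variable R : realType.
Local Notation C := (complex R).
Variable k : nat.

Definition Mat := 'M[C]_(k.+1).

Definition inA (M : Mat) : Prop :=
  exists a : nat -> C, forall p q : 'I_(k.+1),
    M p q = if (p < q)%N then a (q - p)%N else 0.

Definition V := (Mat * Mat)%type.

Definition aff (x : V) : Prop := inA x.1 /\ inA x.2.

Definition affbr (x y : V) : V := (0, x.1 *m y.2 - y.1 *m x.2).

Definition rscale (r : R) (x : V) : V := ((r%:C) *: x.1, (r%:C) *: x.2).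

Inductive rspan (S : V -> Prop) : V -> Prop :=
  | rspan0 : rspan S 0
  | rspan_in x : S x -> rspan S x
  | rspanD x y : rspan S x -> rspan S y -> rspan S (x + y)
  | rspanZ r x : rspan S x -> rspan S (rscale r x).

(* lcs j = g^(j+1) of the lower central series: g^1 = g,
   g^(j+1) = span [g, g^j] *)
Fixpoint lcs (j : nat) : V -> Prop :=
  match j with
  | O => aff
  | S m => rspan (fun z => exists x y, aff x /\ lcs m y /\ z = affbr x y)
  end.

Definition lower_central (j : nat) : V -> Prop := lcs j.-1.

Definition k_step_nilpotent (n : nat) : Prop :=
  (forall z, lower_central n.+1 z -> z = 0) /\
  (exists z, lower_central n z /\ z <> 0).

Definition abelian_complex_structure (J : V -> V) : Prop :=
  (forall x, aff x -> aff (J x)) /\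
  (forall x y, aff x -> aff y -> J (x + y) = J x + J y) /\
  (forall r x, aff x -> J (rscale r x) = rscale r (J x)) /\
  (forall x, aff x -> J (J x) = - x) /\
  (forall x y, aff x -> aff y -> affbr (J x) (J y) = affbr x y).

Definition abelian_hypercomplex_structure (J K : V -> V) : Prop :=
  abelian_complex_structure J /\ abelian_complex_structure K /\
  (forall x, aff x -> J (K x) = - K (J x)).

Definition Jst (x : V) : V := (x.2, - x.1).
Definition Kst (x : V) : V := ('i *: x.1, - ('i *: x.2)).

End Aff.

From HB Require Import structures.
From mathcomp Require Import all_boot all_order all_algebra.
From mathcomp Require Import complex reals.
From mathcomp Require Import zify.
Set Implicit Arguments. Unset Strict Implicit. Unset Printing Implicit Defensive.
Import Order.TTheory GRing.Theory Num.Theory.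
Local Open Scope ring_scope.

(* A is the algebra of polynomials without constant term in the nilpotent
   shift matrix N = shiftmx 1, so it is commutative; this makes J and K
   abelian, and they are real-linear and anticommute because 'i is a scalar.
   Brackets land in the second component and products of elements of A push
   the support strictly upwards, so the m-th term of the lower central series
   of aff(A) vanishes on the diagonals 0..m; for m = k it is zero, while
   (0, N^k) survives in the k-th term. *)

Section ShiftMatrix.
Variables (T : nzRingType) (n : nat).
Local Notation M := 'M[T]_n.+1.

Definition shiftmx (j : nat) : M := \matrix_(p, q) ((q : nat) == p + j)%N%:R.

Lemma sum_eqn_mul (f : 'I_n.+1 -> T) (m : nat) :
  \sum_(r < n.+1) ((r : nat) == m)%:R * f r =
  if (m < n.+1)%N then f (inord m) else 0.
Proof.
case: ltnP => hm.
  rewrite (bigD1 (Ordinal hm)) //= eqxx mul1r big1 ?addr0.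
    by congr f; apply: val_inj; rewrite /= inordK.
  move=> r hr; case: eqP => h; last by rewrite mul0r.
  by case/eqP: hr; apply: val_inj.
apply: big1 => r _; case: eqP => h; last by rewrite mul0r.
by move: (ltn_ord r); lia.
Qed.

Lemma shiftmx_mul i j : shiftmx i *m shiftmx j = shiftmx (i + j).
Proof.
apply/matrixP => p q; rewrite !mxE.
under eq_bigr => r _ do rewrite !mxE.
rewrite sum_eqn_mul; case: ltnP => h.
  by rewrite inordK //; congr (_%:R); apply/eqP/eqP; lia.
by case: eqP => //; move: (ltn_ord q); lia.
Qed.

Lemma shiftmx_exp j : shiftmx 1 ^+ j = shiftmx j.
Proof.
elim: j => [|j IHj].
  by apply/matrixP => p q; rewrite expr0 !mxE addn0 eq_sym.
by rewrite exprS -mulmxE IHj shiftmx_mul.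
Qed.

Lemma shiftmx_neq0 : shiftmx n != 0.
Proof.
apply/negP => /eqP/matrixP/(_ ord0 ord_max); rewrite !mxE /= eqxx.
by apply/eqP; rewrite oner_eq0.
Qed.

Definition zero_upto_supdiag (m : nat) (A : M) :=
  forall p q : 'I_n.+1, (q <= p + m)%N -> A p q = 0.

Lemma zero_upto_supdiag0 m : zero_upto_supdiag m 0.
Proof. by move=> p q _; rewrite mxE. Qed.

Lemma zero_upto_supdiagB m A B :
  zero_upto_supdiag m A -> zero_upto_supdiag m B ->
  zero_upto_supdiag m (A - B).
Proof. by move=> hA hB p q h; rewrite !mxE hA ?hB ?subr0. Qed.

Lemma zero_upto_supdiagD m A B :
  zero_upto_supdiag m A -> zero_upto_supdiag m B ->
  zero_upto_supdiag m (A + B).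
Proof. by move=> hA hB p q h; rewrite !mxE hA ?hB ?addr0. Qed.

Lemma zero_upto_supdiagZ m c A :
  zero_upto_supdiag m A -> zero_upto_supdiag m (c *: A).
Proof. by move=> hA p q h; rewrite !mxE hA ?mulr0. Qed.

Lemma zero_upto_supdiag_mul a b A B :
  zero_upto_supdiag a A -> zero_upto_supdiag b B ->
  zero_upto_supdiag (a + b).+1 (A *m B).
Proof.
move=> hA hB p q hq; rewrite mxE big1 // => r _.
have [hr | hr] := leqP r (p + a); first by rewrite hA ?mul0r.
by rewrite hB ?mulr0 //; lia.
Qed.

Lemma zero_upto_supdiag_eq0 A : zero_upto_supdiag n A -> A = 0.
Proof.
move=> hA; apply/matrixP => p q; rewrite mxE hA //.
by move: (ltn_ord q); lia.
Qed.

End ShiftMatrix.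

Section Toeplitz.
Variables (R : realType) (k : nat).
Local Notation C := (complex R).
Local Notation M := 'M[C]_k.+1.

Lemma inA0 : inA (0 : M).
Proof. by exists (fun=> 0) => p q; rewrite mxE; case: ifP. Qed.

Lemma inA_shiftmx j : (0 < j)%N -> inA (shiftmx C k j).
Proof.
move=> j_gt0; exists (fun m => (m == j)%:R) => p q; rewrite mxE.
case: ifP => hpq; first by congr (_%:R); apply/eqP/eqP; lia.
by case: eqP => // ?; lia.
Qed.

Lemma inAZ (c : C) (A : M) : inA A -> inA (c *: A).
Proof.
case=> a ha; exists (fun m => c * a m) => p q; rewrite mxE ha.
by case: ifP; rewrite ?mulr0.
Qed.

Lemma inAN (A : M) : inA A -> inA (- A).
Proof. by move=> hA; rewrite -scaleN1r; apply: inAZ. Qed.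

Lemma inA_zero_upto_supdiag (A : M) : inA A -> zero_upto_supdiag 0 A.
Proof. by case=> a ha p q h; rewrite ha; case: ltnP => //; lia. Qed.

Lemma inA_horner (A : M) :
  inA A -> exists P : {poly C}, A = horner_mx (shiftmx C k 1) P.
Proof.
case=> a ha.
(* [a 0] is not constrained by [inA A]; the constant term must be 0. *)
pose c (j : nat) := if (0 < j)%N then a j else 0.
exists (\sum_(j < k.+1) c j *: 'X^j).
rewrite linear_sum /=.
under eq_bigr => j _ do rewrite linearZ /= rmorphXn /= horner_mx_X shiftmx_exp.
apply/matrixP => p q; rewrite ha summxE.
under eq_bigr => j _ do rewrite !mxE.
case: ltnP => hpq; last first.
  rewrite big1 // => j _; rewrite /c; case: ifP => h; last by rewrite mul0r.
  by case: eqP => h'; [lia | rewrite mulr0].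
have hj : (q - p < k.+1)%N by move: (ltn_ord q); lia.
rewrite (bigD1 (Ordinal hj)) //= big1 ?addr0.
  have -> : ((q : nat) == p + (q - p))%N by lia.
  by rewrite /c ifT ?mulr1 //; lia.
move=> j hj'; case: eqP => h; last by rewrite mulr0.
by case/eqP: hj'; apply: val_inj => /=; lia.
Qed.

Lemma inA_mulmxC (A B : M) : inA A -> inA B -> A *m B = B *m A.
Proof.
move=> /inA_horner [P ->] /inA_horner [Q ->].
by rewrite mulmxE; apply: comm_horner_mx2.
Qed.

End Toeplitz.

Section LowerCentralSeries.
Variables (R : realType) (k : nat).
Local Notation C := (complex R).

Lemma lcs_zero_upto_supdiag m (z : V R k) :
  lcs m z -> zero_upto_supdiag m z.1 /\ zero_upto_supdiag m z.2.
Proof.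
elim: m z => [|m IHm] z /=.
  by case=> /inA_zero_upto_supdiag h1 /inA_zero_upto_supdiag h2.
elim=> [|_ [x [y [[hx1 hx2] [/IHm [hy1 hy2] ->]]]]|x y _ [hx1 hx2] _ [hy1 hy2]
       |r x _ [hx1 hx2]] /=.
- by split; apply: zero_upto_supdiag0.
- split; first exact: zero_upto_supdiag0.
  apply: zero_upto_supdiagB.
    exact: zero_upto_supdiag_mul (inA_zero_upto_supdiag hx1) hy2.
  rewrite -[m]addn0; exact: zero_upto_supdiag_mul hy1 (inA_zero_upto_supdiag hx2).
- by split; apply: zero_upto_supdiagD.
- by split; apply: zero_upto_supdiagZ.
Qed.

Lemma lcs_shiftmx j : lcs j ((0 : 'M[C]_k.+1), shiftmx C k j.+1).
Proof.
elim: j => [|j IHj] /=; first by split; [apply: inA0 | apply: inA_shiftmx].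
apply: rspan_in; exists (shiftmx C k 1, 0), (0, shiftmx C k j.+1).
split; first by split; [apply: inA_shiftmx | apply: inA0].
by split=> //; rewrite /affbr /= mul0mx subr0 shiftmx_mul.
Qed.

Lemma aff_k_step_nilpotent : (0 < k)%N -> k_step_nilpotent R k k.
Proof.
move=> k_gt0; split.
  case=> z1 z2 /lcs_zero_upto_supdiag /= [/zero_upto_supdiag_eq0 ->].
  by move=> /zero_upto_supdiag_eq0 ->.
exists (0, shiftmx C k k); split.
  by have := lcs_shiftmx k.-1; rewrite prednK.
by move=> /(congr1 snd) Nk_eq0; case/eqP: (shiftmx_neq0 C k).
Qed.

End LowerCentralSeries.

Section HypercomplexStructure.
Variables (R : realType) (k : nat).

Lemma Jst_abelian_complex : abelian_complex_structure (@Jst R k).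
Proof.
split; [|split; [|split; [|split]]].
- by move=> x [h1 h2]; split => //=; apply: inAN.
- by move=> x y _ _; rewrite /Jst /= opprD.
- by move=> r x _; rewrite /Jst /rscale /= scalerN.
- by move=> [a b] _.
- move=> x y [hx1 hx2] [hy1 hy2]; rewrite /affbr /Jst /=.
  by rewrite !mulmxN (inA_mulmxC hx2 hy1) (inA_mulmxC hx1 hy2) opprK addrC.
Qed.

Lemma Kst_abelian_complex : abelian_complex_structure (@Kst R k).
Proof.
have ii : ('i * 'i : R[i]) = -1 by rewrite -expr2 sqrCi.
split; [|split; [|split; [|split]]].
- by move=> x [h1 h2]; split => /=; [apply: inAZ | apply/inAN/inAZ].
- by move=> x y _ _; rewrite /Kst /= !scalerDr opprD.
- by move=> r x _; rewrite /Kst /rscale /= scalerN !scalerA mulrC.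
- by move=> [a b] _; rewrite /Kst /= scalerN opprK !scalerA ii !scaleN1r.
- move=> x y _ _; rewrite /affbr /Kst /=.
  by rewrite !mulmxN -!scalemxAl -!scalemxAr !scalerA ii !scaleN1r !opprK.
Qed.

Lemma Jst_Kst_anticomm x : Jst (Kst x) = - Kst (@Jst R k x).
Proof. by case: x => a b; rewrite /Jst /Kst /= !scalerN !opprK. Qed.

End HypercomplexStructure.

Theorem mainTheorem10 (R : realType) (k : nat) (hk : (0 < k)%N) :
  k_step_nilpotent R k k /\
  abelian_hypercomplex_structure (@Jst R k) (@Kst R k).
Proof.
split; first exact: aff_k_step_nilpotent.
split; first exact: Jst_abelian_complex.
split; first exact: Kst_abelian_complex.
by move=> x _; apply: Jst_Kst_anticomm.
Qed.
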